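(* Consider the pay-to-bid game without re-entry with $n\ge 2$ players and fixed $\rho\le 0$, played according to its unique symmetric subgame perfect equilibrium. As $\frac{v-s}{c}\to\infty$ (equivalently, as $\lambda:=\frac{u(c)}{u(v-s)}\to 0^+$): (I) the expected number of rounds of the game tends to infinity; (II) if $n>2$, the probability that the number of active players is reduced to exactly two at some round before the game ends tends to $1$, i.e. $\Pr\{T_{n,2}<T_{n,1}\}\to 1$; (III) if $n>2$, $\frac{\mathbb{E}[T_{n,2}]}{\mathbb{E}[T_{n,1}]}\to 0$, i.e. the expected time until $n-2$ players have exited is negligible relative to the expected length of the auction.
   Context: Pay-to-bid game: an object has monetary value $v>0$ that is common knowledge; there are $n\ge 2$ players; the bid fee is $c>0$ and the fixed sale price is $s\ge 0$, with $c<v-s$. Play proceeds in rounds with complete information. In each round every active player simultaneously chooses an action in $\{\text{Bid},\text{No Bid}\}$. Each Bid costs $c$, paid immediately to the seller. If exactly one active player bids, she wins the object (value $v$), pays $s$, and the game ends; if two or more bid, play continues; if none bids, the round is replayed (a replay is not counted as a new round). Without re-entry, the active players in the next round are exactly those who bid in the current round. Players do not discount; payoff is $u$(final wealth) with $u(x)=\frac{1-e^{-\rho x}}{\rho}$ for a constant $\rho<0$, or $u(x)=x$ when $\rho=0$. In the unique symmetric subgame perfect equilibrium, when $m$ players are active each plays Bid with probability $1-\lambda^{1/(m-1)}$, where $\lambda=u(c)/u(v-s)$. For $1\le m<n$, $T_{n,m}$ denotes the number of rounds, in the game starting with $n$ active players, until the number of active players is at most $m$; in particular $T_{n,1}$ is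 the round in which the game ends, and $T_{n,2}<T_{n,1}$ means that at some round before the end exactly two players are active. *)

From Stdlib Require Import Reals Lra Lia.
Open Scope R_scope.

Definition util (rho x : R) : R :=
  if Req_EM_T rho 0 then x else (1 - exp (- rho * x)) / rho.

Definition lambda (rho c v s : R) : R := util rho c / util rho (v - s).

(* Equilibrium bid probability with m active players: 1 - lambda^{1/(m-1)}. *)
Definition bidprob (lam : R) (m : nat) : R :=
  1 - Rpower lam (/ INR (m - 1)).

(* One-round transition probability from m active players to k active players
   (k = number of bidders), with replays (nobody bids) removed by conditioning
   on at least one bid.  State 1 means the game has ended (absorbing). *)
Definition trans (lam : R) (m k : nat) : R :=
  match m with
  | O => 0
  | S O => if Nat.eqb k 1 then 1 else 0
  | _ =>
    if andb (Nat.leb 1 k) (Nat.leb k m) then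
      let p := bidprob lam m in
      C m k * p ^ k * (1 - p) ^ (m - k) / (1 - (1 - p) ^ m)
    else 0
  end.

(* dist lam n t j = Pr(number of active players after t rounds is j),
   starting with n active players (t = 0). Once the game ended (state 1),
   the state stays 1. *)
Fixpoint dist (lam : R) (n t j : nat) : R :=
  match t with
  | O => if Nat.eqb j n then 1 else 0
  | S t' => sum_f_R0 (fun i => dist lam n t' i * trans lam i j) n
  end.

(* Pr(T_{n,m} > t) = Pr(more than m players active after t rounds)
   (the number of active players is non-increasing). *)
Definition surv (lam : R) (n m t : nat) : R :=
  sum_f_R0 (fun j => if Nat.ltb m j then dist lam n t j else 0) n.

(* Pr(T_{n,2} = t+1 and exactly two players are active after round t+1),
   i.e. more than two players active after round t and exactly two after
   round t+1.  Summing over t gives Pr(T_{n,2} < T_{n,1}). *)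
Definition enter2 (lam : R) (n t : nat) : R :=
  sum_f_R0 (fun j => if Nat.ltb 2 j then dist lam n t j * trans lam j 2 else 0) n.

From Pilot Require Import Defs.
From Stdlib Require Import Reals Lra Lia.
Open Scope R_scope.

(* Let G t = Pr(more than two players active after t rounds) = surv _ n 2 t,
   H t = Pr(exactly two active after t rounds), e2 t = enter2 _ n t the
   probability of dropping to exactly two at round t+1, and e1 t the probability
   of jumping from more than two players straight to the end of the game.  Then
       G (t+1) = G t - e2 t - e1 t,      H (t+1) = q H t + e2 t,
   with q = trans 2 2 = (1-lambda)/(1+lambda).  If every no-bid probability
   r_j = lambda^(1/(j-1)) is below delta, each state j > 2 moves to 2 with
   probability >= beta = lambda/(4 delta) and to 1 with probability
   <= gamma = 2 n lambda.  An analytic "draining" lemma about such sequences gives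
   E[T_{n,2}] = sum G <= G 0 / beta, Pr(T_{n,2} < T_{n,1}) = sum e2 >= G 0 (1 - 8 n delta)
   and (1 - q) sum H = H 0 + sum e2, hence E[T_{n,1}] = sum G + sum H >= 1/(4 lambda).
   Taking lambda < delta^(n-1) with delta small yields (I)-(III). *)

Lemma Un_cv_ext (u v : nat -> R) (l : R) :
  (forall N, u N = v N) -> Un_cv u l -> Un_cv v l.
Proof.
  intros Huv Hu eps Heps. destruct (Hu eps Heps) as [N HN].
  exists N. intros k Hk. rewrite <- Huv. exact (HN k Hk).
Qed.

Lemma Un_cv_const (c : R) : Un_cv (fun _ => c) c.
Proof.
  intros eps Heps. exists 0%nat. intros k _. unfold Rdist.
  rewrite Rminus_diag, Rabs_R0. exact Heps.
Qed.

Lemma limit_le (u : nat -> R) (l B : R) : (forall N, u N <= B) -> Un_cv u l -> l <= B.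
Proof. intros Hu Hl. exact (Rle_cv_lim Hu Hl (Un_cv_const B)). Qed.

Lemma limit_ge (u : nat -> R) (l B : R) : (forall N, B <= u N) -> Un_cv u l -> B <= l.
Proof. intros Hu Hl. exact (Rle_cv_lim Hu (Un_cv_const B) Hl). Qed.

Lemma series_partial_le (f : nat -> R) (l : R) :
  (forall t, 0 <= f t) -> infinite_sum f l -> forall N, sum_f_R0 f N <= l.
Proof.
  intros Hf Hl N. apply growing_ineq; [|exact Hl].
  intro k. simpl. specialize (Hf (S k)). lra.
Qed.

Lemma series_bounded_cv (f : nat -> R) (B : R) :
  (forall t, 0 <= f t) -> (forall N, sum_f_R0 f N <= B) ->
  exists l, infinite_sum f l /\ l <= B.
Proof.
  intros Hf HB.
  assert (Hgrow : Un_growing (sum_f_R0 f)) by (intro k; simpl; specialize (Hf (S k)); lra).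
  destruct (growing_cv _ Hgrow) as [l Hl].
  - exists B. intros x [i ->]. apply HB.
  - exists l. split; [exact Hl | exact (limit_le _ l B HB Hl)].
Qed.

Lemma series_terms_vanish (f : nat -> R) (l : R) :
  infinite_sum f l -> Un_cv (fun N => f (S N)) 0.
Proof.
  intro Hl.
  assert (Hdiff : Un_cv (fun N => sum_f_R0 f (N + 1) - sum_f_R0 f N) (l - l))
    by exact (CV_minus _ _ _ _ (CV_shift' _ 1 l Hl) Hl).
  rewrite Rminus_diag in Hdiff. refine (Un_cv_ext _ _ _ _ Hdiff).
  intro N. rewrite Nat.add_1_r, tech5. ring.
Qed.

Lemma series_exceeds (f : nat -> R) (l M : R) :
  infinite_sum f l -> M < l -> exists N, M < sum_f_R0 f N.
Proof.
  intros Hl HM. destruct (Hl (l - M)) as [N HN]; [lra|].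
  exists N. specialize (HN N (le_n N)). unfold Rdist in HN. apply Rabs_def2 in HN. lra.
Qed.

Lemma infinite_sum_plus (f g : nat -> R) (a b : R) :
  infinite_sum f a -> infinite_sum g b -> infinite_sum (fun t => f t + g t) (a + b).
Proof.
  intros Hf Hg. apply (Un_cv_ext (fun N => sum_f_R0 f N + sum_f_R0 g N)).
  - intro N. symmetry. apply sum_plus.
  - exact (CV_plus _ _ _ _ Hf Hg).
Qed.

(* A mass G t (more than two players active) leaks at each
   step into a reservoir H (exactly two active) at rate at least beta, and to the
   end state at rate at most gamma; the reservoir retains a fraction q of its mass
   at each step. *)
Section Draining.
Variables (G H e1 e2 : nat -> R) (beta gamma q : R).
Hypotheses (Hbeta : 0 < beta) (Hgamma : 0 <= gamma) (Hq : 0 <= q < 1)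
  (HG : forall t, 0 <= G t) (HH : forall t, 0 <= H t) (He1 : forall t, 0 <= e1 t)
  (HGstep : forall t, G (S t) = G t - e2 t - e1 t)
  (HHstep : forall t, H (S t) = q * H t + e2 t)
  (He2_ge : forall t, beta * G t <= e2 t)
  (He1_le : forall t, e1 t <= gamma * G t).

Lemma drain_e2_nonneg t : 0 <= e2 t.
Proof. pose proof (He2_ge t). pose proof (HG t). nra. Qed.

(* Conservation: what has left G by time N + 1 went either to H or to the end. *)
Lemma drain_telescope N : sum_f_R0 e2 N + sum_f_R0 e1 N = G 0%nat - G (S N).
Proof.
  induction N as [|N IH]; simpl.
  - rewrite HGstep. ring.
  - rewrite (HGstep (S N)). lra.
Qed.

(* Since at least beta * G t leaves G at each step, sum G <= G 0 / beta. *)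
Lemma drain_G_series : exists E, infinite_sum G E /\ 0 <= E <= G 0%nat / beta.
Proof.
  assert (Hbound : forall N, sum_f_R0 G N <= G 0%nat / beta).
  { intro N. apply Rmult_le_reg_l with beta; [lra|].
    replace (beta * (G 0%nat / beta)) with (G 0%nat) by (field; lra).
    rewrite scal_sum.
    assert (sum_f_R0 (fun t => G t * beta) N <= sum_f_R0 e2 N)
      by (apply sum_Rle; intros t _; rewrite Rmult_comm; apply He2_ge).
    pose proof (drain_telescope N). pose proof (HG (S N)).
    pose proof (cond_pos_sum e1 N He1). lra. }
  destruct (series_bounded_cv G _ HG Hbound) as [E [HE HEb]].
  exists E. split; [exact HE | split; [|exact HEb]].
  pose proof (series_partial_le G E HG HE 0%nat). simpl in *. pose proof (HG 0%nat). lra.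
Qed.

(* The total inflow into H is G 0 minus the total direct loss, which is at most
   gamma * sum G (and G t -> 0 because sum G converges). *)
Lemma drain_inflow_series E : infinite_sum G E ->
  exists P, infinite_sum e2 P /\ G 0%nat - gamma * E <= P <= G 0%nat.
Proof.
  intro HE.
  assert (Hupper : forall N, sum_f_R0 e2 N <= G 0%nat).
  { intro N. pose proof (drain_telescope N). pose proof (HG (S N)).
    pose proof (cond_pos_sum e1 N He1). lra. }
  destruct (series_bounded_cv e2 _ drain_e2_nonneg Hupper) as [P [HP HPb]].
  exists P. split; [exact HP | split; [|exact HPb]].
  assert (Hlow : forall N, G 0%nat - gamma * E - G (S N) <= sum_f_R0 e2 N).
  { intro N. pose proof (drain_telescope N).
    assert (sum_f_R0 e1 N <= gamma * sum_f_R0 G N).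
    { rewrite scal_sum. apply sum_Rle. intros t _. rewrite Rmult_comm. apply He1_le. }
    pose proof (series_partial_le G E HG HE N). nra. }
  assert (Hcv : Un_cv (fun N => G 0%nat - gamma * E - G (S N)) (G 0%nat - gamma * E - 0))
    by exact (CV_minus _ _ _ _ (Un_cv_const _) (series_terms_vanish G E HE)).
  rewrite Rminus_0_r in Hcv. exact (Rle_cv_lim Hlow Hcv HP).
Qed.

Lemma drain_H_partial N :
  sum_f_R0 H (S N) = H 0%nat + q * sum_f_R0 H N + sum_f_R0 e2 N.
Proof.
  induction N as [|N IH].
  - simpl. rewrite HHstep. ring.
  - rewrite tech5 in IH. rewrite (tech5 H (S N)), (tech5 H N), (tech5 e2 N), (HHstep (S N)). lra.
Qed.

(* Passing to the limit in drain_H_partial: L = H 0 + q L + P. *)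
Lemma drain_H_series P : infinite_sum e2 P ->
  exists L, infinite_sum H L /\ (1 - q) * L = H 0%nat + P.
Proof.
  intro HP.
  assert (HP0 : 0 <= P)
    by exact (limit_ge _ P 0 (fun N => cond_pos_sum e2 N drain_e2_nonneg) HP).
  set (B := (H 0%nat + P) / (1 - q)).
  assert (HB : H 0%nat + q * B + P = B) by (unfold B; field; lra).
  assert (Hbound : forall N, sum_f_R0 H N <= B).
  { assert (H 0%nat <= B).
    { unfold B. apply Rmult_le_reg_r with (1 - q); [lra|].
      replace ((H 0%nat + P) / (1 - q) * (1 - q)) with (H 0%nat + P) by (field; lra).
      pose proof (HH 0%nat). nra. }
    induction N as [|N IH]; [simpl; lra|].
    rewrite drain_H_partial. pose proof (series_partial_le e2 P drain_e2_nonneg HP N). nra. }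
  destruct (series_bounded_cv H B HH Hbound) as [L [HL _]].
  exists L. split; [exact HL|].
  assert (Hrhs : Un_cv (fun N => H 0%nat + q * sum_f_R0 H N + sum_f_R0 e2 N) (H 0%nat + q * L + P))
    by exact (CV_plus _ _ _ _ (CV_plus _ _ _ _ (Un_cv_const _) (CV_mult _ _ _ _ (Un_cv_const q) HL)) HP).
  assert (Hlhs : Un_cv (fun N => H 0%nat + q * sum_f_R0 H N + sum_f_R0 e2 N) L).
  { apply (Un_cv_ext (fun N => sum_f_R0 H (N + 1))).
    - intro N. rewrite Nat.add_1_r. apply drain_H_partial.
    - exact (CV_shift' _ 1 L HL). }
  pose proof (UL_sequence _ _ _ Hlhs Hrhs). lra.
Qed.

End Draining.

Lemma sum_swap (f : nat -> nat -> R) (n m : nat) :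
  sum_f_R0 (fun j => sum_f_R0 (fun i => f i j) n) m =
  sum_f_R0 (fun i => sum_f_R0 (fun j => f i j) m) n.
Proof.
  induction m as [|m IH]; simpl; [reflexivity|].
  rewrite IH, <- sum_plus. reflexivity.
Qed.

Lemma sum_trunc (f : nat -> R) (i n : nat) : (i <= n)%nat ->
  (forall j, (i < j <= n)%nat -> f j = 0) -> sum_f_R0 f n = sum_f_R0 f i.
Proof.
  intros Hin Hz. induction Hin as [|m Him IH]; [reflexivity|].
  rewrite tech5, IH by (intros; apply Hz; lia). rewrite (Hz (S m)) by lia. ring.
Qed.

Lemma sum_last (f : nat -> R) (n : nat) : (forall j, (j < n)%nat -> f j = 0) ->
  sum_f_R0 f n = f n.
Proof.
  intro Hz. destruct n as [|n]; [reflexivity|].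
  rewrite tech5, (sum_eq f (fun _ => 0)), sum_cte by (intros; apply Hz; lia). ring.
Qed.

Lemma sum_split2 (f : nat -> R) (n : nat) : (2 <= n)%nat ->
  sum_f_R0 f n = f 0%nat + f 1%nat + f 2%nat +
    sum_f_R0 (fun j => if Nat.ltb 2 j then f j else 0) n.
Proof.
  intro Hn. induction Hn as [|m Hm IH]; [simpl; ring|].
  rewrite !tech5, IH. replace (Nat.ltb 2 (S m)) with true
    by (symmetry; apply Nat.ltb_lt; lia). ring.
Qed.

Lemma sum_split1 (f : nat -> R) (n : nat) : (2 <= n)%nat ->
  sum_f_R0 (fun j => if Nat.ltb 1 j then f j else 0) n =
  f 2%nat + sum_f_R0 (fun j => if Nat.ltb 2 j then f j else 0) n.
Proof.
  intro Hn. induction Hn as [|m Hm IH]; [simpl; ring|].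
  rewrite !tech5, IH. replace (Nat.ltb 2 (S m)) with true
    by (symmetry; apply Nat.ltb_lt; lia).
  replace (Nat.ltb 1 (S m)) with true by (symmetry; apply Nat.ltb_lt; lia). ring.
Qed.

Lemma C_nonneg (n k : nat) : 0 <= C n k.
Proof.
  unfold C. apply Rmult_le_pos; [apply pos_INR|]. left. apply Rinv_0_lt_compat.
  apply Rmult_lt_0_compat; apply lt_0_INR; apply Factorial.lt_O_fact.
Qed.

Lemma C_n_0 (n : nat) : C n 0 = 1.
Proof.
  unfold C. rewrite Nat.sub_0_r. simpl (Factorial.fact 0). rewrite Rmult_1_l.
  apply Rinv_r. apply not_0_INR. pose proof (Factorial.lt_O_fact n). lia.
Qed.

Lemma C_n_n (n : nat) : C n n = 1.
Proof.
  unfold C. rewrite Nat.sub_diag. simpl (Factorial.fact 0). rewrite Rmult_1_r.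
  apply Rinv_r. apply not_0_INR. pose proof (Factorial.lt_O_fact n). lia.
Qed.

Lemma C_n_1 (n : nat) : (1 <= n)%nat -> C n 1 = INR n.
Proof.
  intro Hn. destruct n as [|n]; [lia|]. unfold C. replace (S n - 1)%nat with n by lia.
  rewrite fact_simpl, mult_INR. simpl (Factorial.fact 1).
  assert (INR (Factorial.fact n) <> 0)
    by (apply not_0_INR; pose proof (Factorial.lt_O_fact n); lia).
  change (INR 1) with 1. field. exact H.
Qed.

Lemma C_ge1 (n k : nat) : (k <= n)%nat -> 1 <= C n k.
Proof.
  revert k. induction n as [|n IH]; intros k Hk.
  - replace k with 0%nat by lia. rewrite C_n_0. lra.
  - destruct k as [|k]; [rewrite C_n_0; lra|].
    destruct (Nat.eq_dec k n) as [->|Hne]; [rewrite C_n_n; lra|].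
    rewrite <- pascal by lia. pose proof (IH k ltac:(lia)). pose proof (C_nonneg n (S k)). lra.
Qed.

(* The probability that a given player does not bid when m players are
   active: r = lambda^(1/(m-1)), i.e. r^(m-1) = lambda. *)
Definition nobid (lam : R) (m : nat) : R := Rpower lam (/ INR (m - 1)).

Lemma nobid_pos (lam : R) (m : nat) : 0 < nobid lam m.
Proof. unfold nobid, Rpower. apply exp_pos. Qed.

Lemma nobid_pow (lam : R) (m : nat) : 0 < lam -> (2 <= m)%nat ->
  nobid lam m ^ (m - 1) = lam.
Proof.
  intros Hl Hm. unfold nobid. rewrite <- Rpower_pow by (unfold Rpower; apply exp_pos).
  rewrite Rpower_mult, Rinv_l by (apply not_0_INR; lia). apply Rpower_1; auto.
Qed.

Lemma nobid_2 (lam : R) : 0 < lam -> nobid lam 2 = lam.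
Proof. intro Hl. pose proof (nobid_pow lam 2 Hl (le_n 2)) as Hpow. simpl in Hpow. lra. Qed.

Lemma trans_formula (lam : R) (m k : nat) : (2 <= m)%nat -> (1 <= k <= m)%nat ->
  trans lam m k =
  C m k * (1 - nobid lam m) ^ k * nobid lam m ^ (m - k) / (1 - nobid lam m ^ m).
Proof.
  intros Hm Hk. destruct m as [|[|m]]; try lia. unfold trans.
  replace (andb (Nat.leb 1 k) (Nat.leb k (S (S m)))) with true
    by (symmetry; apply andb_true_intro; split; apply Nat.leb_le; lia).
  unfold bidprob, nobid. replace (1 - (1 - Rpower lam (/ INR (S (S m) - 1))))
    with (Rpower lam (/ INR (S (S m) - 1))) by ring. reflexivity.
Qed.

Lemma trans_above (lam : R) (m k : nat) : (m < k)%nat -> trans lam m k = 0.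
Proof.
  intro Hmk. destruct m as [|[|m]]; unfold trans; [reflexivity| |].
  - replace (Nat.eqb k 1) with false by (symmetry; apply Nat.eqb_neq; lia). reflexivity.
  - replace (Nat.leb k (S (S m))) with false by (symmetry; apply Nat.leb_gt; lia).
    rewrite Bool.andb_false_r. reflexivity.
Qed.

Lemma trans_to0 (lam : R) (m : nat) : trans lam m 0 = 0.
Proof. destruct m as [|[|m]]; reflexivity. Qed.

Lemma pow_antimono (x : R) (a b : nat) : 0 <= x <= 1 -> (a <= b)%nat -> x ^ b <= x ^ a.
Proof.
  intros Hx Hab. replace b with (a + (b - a))%nat by lia. rewrite pow_add.
  assert (x ^ (b - a) <= 1) by (rewrite <- (pow1 (b - a)); apply pow_incr; lra).
  pose proof (pow_le x a (proj1 Hx)). nra.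
Qed.

Section Kernel.
Variable lam : R.
Hypothesis Hlam : 0 < lam < 1.

Lemma nobid_lt1 (m : nat) : (2 <= m)%nat -> nobid lam m < 1.
Proof.
  intro Hm. pose proof (nobid_pow lam m (proj1 Hlam) Hm). pose proof (nobid_pos lam m).
  destruct (Rlt_or_le (nobid lam m) 1) as [Hlt|Hge]; [exact Hlt|].
  assert (1 ^ (m - 1) <= nobid lam m ^ (m - 1)) by (apply pow_incr; lra).
  rewrite pow1 in *. lra.
Qed.

(* Conditioning on "somebody bids" is well defined: 1 - r^m > 0. *)
Lemma somebody_bids (m : nat) : (2 <= m)%nat -> 0 < 1 - nobid lam m ^ m.
Proof.
  intro Hm. pose proof (nobid_lt1 m Hm). pose proof (nobid_pos lam m).
  pose proof (pow_lt_1_compat (nobid lam m) m ltac:(lra) ltac:(lia)). lra.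
Qed.

Lemma trans_nonneg (m k : nat) : 0 <= trans lam m k.
Proof.
  destruct (Nat.lt_ge_cases m k) as [Hmk|Hkm]; [rewrite trans_above by exact Hmk; lra|].
  destruct k as [|k]; [rewrite trans_to0; lra|].
  destruct m as [|[|m]]; [simpl; lra | unfold trans; destruct (Nat.eqb (S k) 1); lra|].
  rewrite trans_formula by lia.
  pose proof (nobid_lt1 (S (S m)) ltac:(lia)). pose proof (nobid_pos lam (S (S m))).
  pose proof (somebody_bids (S (S m)) ltac:(lia)).
  apply Rmult_le_pos; [|left; apply Rinv_0_lt_compat; lra].
  apply Rmult_le_pos; [apply Rmult_le_pos; [apply C_nonneg|]|]; apply pow_le; lra.
Qed.

(* Each row m >= 2 of the kernel is a probability distribution, by the
   binomial theorem applied to ((1 - r) + r)^m. *)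
Lemma trans_row_sum (m n : nat) : (2 <= m <= n)%nat -> sum_f_R0 (trans lam m) n = 1.
Proof.
  intro Hm. rewrite (sum_trunc _ m n) by (try lia; intros; apply trans_above; lia).
  set (r := nobid lam m).
  pose proof (somebody_bids m ltac:(lia)) as Hden. fold r in Hden.
  rewrite (sum_eq _ (fun j => (C m j * (1 - r) ^ j * r ^ (m - j) -
                  (if Nat.eqb j 0 then r ^ m else 0)) / (1 - r ^ m))).
  - unfold Rdiv. rewrite <- scal_sum, minus_sum, <- binomial.
    replace (1 - r + r) with 1 by ring. rewrite pow1.
    rewrite (sum_trunc (fun i => if Nat.eqb i 0 then r ^ m else 0) 0 m)
      by (lia || (intros [|j] Hj; [lia | reflexivity])).
    simpl. field. lra.
  - intros [|i] Hi.
    + rewrite trans_to0. simpl. rewrite Nat.sub_0_r, C_n_0. field. lra.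
    + rewrite trans_formula by lia. simpl (Nat.eqb (S i) 0). fold r. rewrite Rminus_0_r. field. lra.
Qed.

(* If lambda < delta^(n-1) then every no-bid probability r_i (2 <= i <= n)
   is below delta, since r_i^(i-1) = lambda. *)
Lemma nobid_small (n : nat) (dl : R) (i : nat) : 0 < dl <= 1 -> lam < dl ^ (n - 1) ->
  (2 <= i <= n)%nat -> nobid lam i < dl.
Proof.
  intros Hdl Hlt Hi. pose proof (nobid_pow lam i (proj1 Hlam) ltac:(lia)).
  pose proof (nobid_pos lam i).
  destruct (Rlt_or_le (nobid lam i) dl) as [Hr|Hr]; [exact Hr|].
  assert (dl ^ (i - 1) <= nobid lam i ^ (i - 1)) by (apply pow_incr; lra).
  assert (dl ^ (n - 1) <= dl ^ (i - 1)) by (apply pow_antimono; lra || lia).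
  lra.
Qed.

(* From j >= 3 players, exactly two bid with probability at least
   lambda / (4 delta): the dominant event "two bid, j - 2 abstain" has
   probability ~ r^(j-2) = lambda / r. *)
Lemma trans_to2_lower (j : nat) (dl : R) : (3 <= j)%nat -> nobid lam j < dl -> dl <= 1/2 ->
  lam / (4 * dl) <= trans lam j 2.
Proof.
  intros Hj Hr Hdl. rewrite trans_formula by lia. set (r := nobid lam j) in *.
  pose proof (nobid_pos lam j) as Hr0. fold r in Hr0.
  pose proof (somebody_bids j ltac:(lia)) as Hden. fold r in Hden.
  assert (Hden1 : 1 - r ^ j <= 1) by (pose proof (pow_le r j); lra).
  set (x := r ^ (j - 2)).
  assert (Hx : x * r = lam).
  { unfold x. rewrite <- (nobid_pow lam j (proj1 Hlam)) by lia. fold r.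
    replace (j - 1)%nat with ((j - 2) + 1)%nat by lia. rewrite pow_add. ring. }
  assert (Hx0 : 0 <= x) by (unfold x; apply pow_le; lra).
  assert (HC : 1 <= C j 2) by (apply C_ge1; lia).
  assert (Hbid2 : 1/4 <= C j 2 * (1 - r) ^ 2) by (simpl; nra).
  set (num := C j 2 * (1 - r) ^ 2 * x).
  assert (Hnum : x / 4 <= num) by (unfold num; nra).
  assert (num <= num / (1 - r ^ j)).
  { apply Rmult_le_reg_r with (1 - r ^ j); [lra|].
    replace (num / (1 - r ^ j) * (1 - r ^ j)) with num by (field; lra). nra. }
  assert (lam / (4 * dl) <= x / 4).
  { apply Rmult_le_reg_r with (4 * dl); [lra|].
    replace (lam / (4 * dl) * (4 * dl)) with lam by (field; lra). nra. }
  lra.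
Qed.

(* From j players (3 <= j <= n), the game ends in one round with probability
   at most 2 n lambda: exactly one bidder has probability j (1-r) r^(j-1). *)
Lemma trans_to1_upper (n j : nat) : (3 <= j <= n)%nat -> nobid lam j <= 1/2 ->
  trans lam j 1 <= 2 * INR n * lam.
Proof.
  intros Hj Hr. rewrite trans_formula, C_n_1, pow_1, (nobid_pow lam j (proj1 Hlam)) by lia.
  set (r := nobid lam j) in *.
  pose proof (nobid_pos lam j) as Hr0. fold r in Hr0.
  assert (r ^ j <= r)
    by (rewrite <- (pow_1 r) at 2; apply pow_antimono; lra || lia).
  assert (HjR : INR j <= INR n) by (apply le_INR; lia).
  pose proof (pos_INR j).
  apply Rmult_le_reg_r with (1 - r ^ j); [lra|].
  replace (INR j * (1 - r) * lam / (1 - r ^ j) * (1 - r ^ j))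
    with (INR j * (1 - r) * lam) by (field; lra).
  assert (INR j * (1 - r) <= INR n) by nra.
  assert (INR j * (1 - r) * lam <= INR n * lam) by (apply Rmult_le_compat_r; lra).
  assert (INR n * lam <= INR n * lam * (2 * (1 - r ^ j)))
    by (pose proof (pos_INR n); rewrite <- (Rmult_1_r (INR n * lam)) at 1;
        apply Rmult_le_compat_l; nra).
  lra.
Qed.

Lemma trans_22 : trans lam 2 2 = (1 - lam) / (1 + lam).
Proof.
  rewrite trans_formula, nobid_2, C_n_n by (lia || lra). simpl. field. split; nra.
Qed.

(* For lambda < delta^(n-1) with delta <= 1/32, every state 2 < j <= n moves to
   state 2 with probability >= beta = lambda/(4 delta) and to state 1 with
   probability <= gamma = 2 n lambda: the hypotheses of the draining lemma. *)
Lemma kernel_small_lambda (n : nat) (dl : R) : 0 < dl <= 1 / 32 -> lam < dl ^ (n - 1) ->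
  forall j, (2 < j <= n)%nat ->
    lam / (4 * dl) <= trans lam j 2 /\ trans lam j 1 <= 2 * INR n * lam.
Proof.
  intros Hdl Hlt j Hj.
  assert (Hr : nobid lam j < dl) by (apply (nobid_small n); lra || lia).
  split; [apply trans_to2_lower | apply trans_to1_upper]; lra || lia.
Qed.

Lemma two_player_time_lower (L X : R) :
  (1 - (1 - lam) / (1 + lam)) * L = X -> 1 / 2 <= X -> 1 / (4 * lam) <= L.
Proof.
  intros HL HX. destruct Hlam as [Hl0 Hl1].
  replace (1 - (1 - lam) / (1 + lam)) with (2 * lam / (1 + lam)) in HL by (field; lra).
  assert (Hk0 : 0 < 2 * lam / (1 + lam)) by (apply Rdiv_lt_0_compat; lra).
  assert (Hk2 : 2 * lam / (1 + lam) <= 2 * lam).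
  { apply Rmult_le_reg_r with (1 + lam); [lra|].
    replace (2 * lam / (1 + lam) * (1 + lam)) with (2 * lam) by (field; lra). nra. }
  assert (1 / 2 <= 2 * lam * L) by nra.
  apply Rmult_le_reg_r with (4 * lam); [lra|].
  replace (1 / (4 * lam) * (4 * lam)) with 1 by (field; lra). lra.
Qed.

End Kernel.

(* Pr(more than two players active after round t and the game ends at round t+1,
   i.e. T_{n,2} = T_{n,1} = t + 1). *)
Definition jump_to_end (lam : R) (n t : nat) : R :=
  sum_f_R0 (fun j => if Nat.ltb 2 j then Defs.dist lam n t j * trans lam j 1 else 0) n.

Section Chain.
Variables (lam : R) (n : nat).
Hypotheses (Hlam : 0 < lam < 1) (Hn : (2 <= n)%nat).

Lemma dist_nonneg t j : 0 <= Defs.dist lam n t j.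
Proof.
  revert j. induction t as [|t IH]; intro j; simpl.
  - destruct (Nat.eqb j n); lra.
  - apply cond_pos_sum. intro i. apply Rmult_le_pos; [apply IH | apply trans_nonneg; auto].
Qed.

Lemma surv_nonneg m t : 0 <= surv lam n m t.
Proof.
  apply cond_pos_sum. intro j. destruct (Nat.ltb m j); [apply dist_nonneg | lra].
Qed.

Lemma jump_to_end_nonneg t : 0 <= jump_to_end lam n t.
Proof.
  apply cond_pos_sum. intro j. destruct (Nat.ltb 2 j); [|lra].
  apply Rmult_le_pos; [apply dist_nonneg | apply trans_nonneg; auto].
Qed.

Lemma surv_start m : (m < n)%nat -> surv lam n m 0 = 1.
Proof.
  intro Hm. unfold surv. simpl Defs.dist. rewrite sum_last.
  - rewrite Nat.eqb_refl. replace (Nat.ltb m n) with true by (symmetry; apply Nat.ltb_lt; lia).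
    reflexivity.
  - intros j Hj. replace (Nat.eqb j n) with false by (symmetry; apply Nat.eqb_neq; lia).
    destruct (Nat.ltb m j); reflexivity.
Qed.

Lemma stay_above_two i : (i <= n)%nat ->
  sum_f_R0 (fun j => if Nat.ltb 2 j then trans lam i j else 0) n =
  if Nat.ltb 2 i then 1 - trans lam i 1 - trans lam i 2 else 0.
Proof.
  intro Hi. destruct (Nat.ltb 2 i) eqn:Ei.
  - apply Nat.ltb_lt in Ei. pose proof (sum_split2 (trans lam i) n Hn) as Hsplit.
    rewrite trans_row_sum, trans_to0 in Hsplit by (auto; lia). lra.
  - apply Nat.ltb_ge in Ei. rewrite (sum_eq _ (fun _ => 0)), sum_cte; [ring|].
    intros j Hj. destruct (Nat.ltb 2 j) eqn:Ej; [|reflexivity].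
    apply Nat.ltb_lt in Ej. apply trans_above. lia.
Qed.

Lemma surv2_step t :
  surv lam n 2 (S t) = surv lam n 2 t - enter2 lam n t - jump_to_end lam n t.
Proof.
  unfold surv, enter2, jump_to_end. simpl Defs.dist.
  rewrite (sum_eq _ (fun j => sum_f_R0 (fun i => Defs.dist lam n t i *
            (if Nat.ltb 2 j then trans lam i j else 0)) n)).
  2:{ intros j _. destruct (Nat.ltb 2 j); [reflexivity|].
      rewrite (sum_eq _ (fun _ => 0)), sum_cte by (intros; ring). ring. }
  rewrite sum_swap, (sum_eq _ (fun i => Defs.dist lam n t i *
      (if Nat.ltb 2 i then 1 - trans lam i 1 - trans lam i 2 else 0))).
  2:{ intros i Hi. rewrite <- stay_above_two by exact Hi. rewrite scal_sum.
      apply sum_eq. intros; ring. }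
  rewrite <- !minus_sum. apply sum_eq. intros i _. destruct (Nat.ltb 2 i); ring.
Qed.

Lemma dist2_step t : Defs.dist lam n (S t) 2 = trans lam 2 2 * Defs.dist lam n t 2 + enter2 lam n t.
Proof.
  simpl Defs.dist. rewrite sum_split2 by exact Hn. unfold enter2.
  rewrite (trans_above lam 0 2), (trans_above lam 1 2) by lia. ring.
Qed.

Lemma surv1_split t : surv lam n 1 t = surv lam n 2 t + Defs.dist lam n t 2.
Proof. unfold surv. rewrite sum_split1 by exact Hn. ring. Qed.

Lemma enter2_ge beta : (forall j, (2 < j <= n)%nat -> beta <= trans lam j 2) ->
  forall t, beta * surv lam n 2 t <= enter2 lam n t.
Proof.
  intros Hb t. unfold surv, enter2. rewrite scal_sum. apply sum_Rle.
  intros j Hj. destruct (Nat.ltb 2 j) eqn:Ej; [|lra]. apply Nat.ltb_lt in Ej.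
  pose proof (Hb j ltac:(lia)). pose proof (dist_nonneg t j). nra.
Qed.

Lemma jump_to_end_le gamma : (forall j, (2 < j <= n)%nat -> trans lam j 1 <= gamma) ->
  forall t, jump_to_end lam n t <= gamma * surv lam n 2 t.
Proof.
  intros Hg t. unfold surv, jump_to_end. rewrite scal_sum. apply sum_Rle.
  intros j Hj. destruct (Nat.ltb 2 j) eqn:Ej; [|lra]. apply Nat.ltb_lt in Ej.
  pose proof (Hg j ltac:(lia)). pose proof (dist_nonneg t j). nra.
Qed.

(* The chain is an instance of the draining lemma: with G = surv 2 and
   H = dist _ 2 we get E[T_{n,2}] = E2, Pr(T_{n,2} < T_{n,1}) = P and
   E[T_{n,1}] = E2 + L. *)
Lemma chain_draining beta gamma : 0 < beta -> 0 <= gamma ->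
  (forall j, (2 < j <= n)%nat -> beta <= trans lam j 2) ->
  (forall j, (2 < j <= n)%nat -> trans lam j 1 <= gamma) ->
  exists E2 P L,
    infinite_sum (surv lam n 2) E2 /\ infinite_sum (enter2 lam n) P /\
    infinite_sum (surv lam n 1) (E2 + L) /\
    0 <= E2 <= surv lam n 2 0 / beta /\
    surv lam n 2 0 - gamma * E2 <= P <= surv lam n 2 0 /\
    (1 - trans lam 2 2) * L = Defs.dist lam n 0 2 + P.
Proof.
  intros Hbeta Hgamma Hb Hg.
  assert (Hq : 0 <= trans lam 2 2 < 1).
  { rewrite trans_22 by exact Hlam. split.
    - apply Rmult_le_pos; [lra | left; apply Rinv_0_lt_compat; lra].
    - apply Rmult_lt_reg_r with (1 + lam); [lra|].
      replace ((1 - lam) / (1 + lam) * (1 + lam)) with (1 - lam) by (field; lra). lra. }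
  pose proof (enter2_ge beta Hb) as Hin.
  pose proof (jump_to_end_le gamma Hg) as Hout.
  destruct (drain_G_series (surv lam n 2) (jump_to_end lam n) (enter2 lam n) beta
    Hbeta (surv_nonneg 2) jump_to_end_nonneg surv2_step Hin) as [E2 [HE2 HE2b]].
  destruct (drain_inflow_series (surv lam n 2) (jump_to_end lam n) (enter2 lam n) beta gamma
    Hbeta Hgamma (surv_nonneg 2) jump_to_end_nonneg surv2_step Hin Hout E2 HE2)
    as [P [HP HPb]].
  destruct (drain_H_series (surv lam n 2) (fun t => Defs.dist lam n t 2) (enter2 lam n)
    beta (trans lam 2 2) Hbeta Hq (surv_nonneg 2) (fun t => dist_nonneg t 2) dist2_step Hin P HP)
    as [L [HL HLeq]].
  exists E2, P, L. repeat split; auto; try lra.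
  refine (Un_cv_ext _ _ _ _ (infinite_sum_plus _ _ _ _ HE2 HL)).
  intro N. apply sum_eq. intros t _. symmetry. apply surv1_split.
Qed.

End Chain.

Lemma small_lambda_estimates (n : nat) (lam dl : R) : (2 <= n)%nat -> 0 < lam ->
  0 < dl -> dl <= 1 / (16 * INR n) -> lam < dl ^ (n - 1) ->
  exists E2 P L,
    infinite_sum (surv lam n 2) E2 /\ infinite_sum (enter2 lam n) P /\
    infinite_sum (surv lam n 1) (E2 + L) /\
    0 <= E2 <= 4 * dl / lam /\ 1 / (4 * lam) <= L /\ P <= 1 /\
    ((2 < n)%nat -> 1 - 8 * INR n * dl <= P).
Proof.
  intros Hn Hl Hdl Hdn Hlt.
  assert (HnR : 2 <= INR n) by (apply (le_INR 2); exact Hn).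
  assert (Hndl : 16 * INR n * dl <= 1).
  { apply Rmult_le_reg_r with (/ (16 * INR n)); [apply Rinv_0_lt_compat; lra|].
    replace (16 * INR n * dl * / (16 * INR n)) with dl by (field; lra). lra. }
  assert (Hdl32 : dl <= 1 / 32) by nra.
  assert (Hl1 : lam < 1).
  { apply Rlt_le_trans with (dl ^ (n - 1)); [exact Hlt|].
    rewrite <- (pow1 (n - 1)). apply pow_incr. lra. }
  assert (Hlam : 0 < lam < 1) by lra.
  pose proof (kernel_small_lambda lam Hlam n dl ltac:(lra) Hlt) as Hkernel.
  destruct (chain_draining lam n Hlam Hn (lam / (4 * dl)) (2 * INR n * lam))
    as [E2 [P [L [HE2 [HP [HE1 [HE2b [HPb HL]]]]]]]];
    [apply Rdiv_lt_0_compat; lra | nra | apply Hkernel | apply Hkernel |].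
  rewrite trans_22 in HL by exact Hlam.
  set (G0 := surv lam n 2 0) in *. set (H0 := Defs.dist lam n 0 2) in *.
  assert (HGH : G0 + H0 = 1) by (unfold G0, H0; rewrite <- surv1_split, surv_start; lra || lia).
  assert (HG0 : 0 <= G0) by (apply surv_nonneg; lra).
  assert (HH0 : 0 <= H0) by (apply dist_nonneg; lra).
  assert (Hratio : 0 < 4 * dl / lam) by (apply Rdiv_lt_0_compat; lra).
  replace (G0 / (lam / (4 * dl))) with (4 * dl / lam * G0) in HE2b by (field; lra).
  (* the inflow misses at most gamma * E2 <= 8 n delta * G0 *)
  assert (HPlow : G0 * (1 - 8 * INR n * dl) <= P).
  { assert (Hloss : 2 * INR n * lam * E2 <= 2 * INR n * lam * (4 * dl / lam * G0))
      by (apply Rmult_le_compat_l; [nra | lra]).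
    replace (2 * INR n * lam * (4 * dl / lam * G0)) with (8 * INR n * dl * G0) in Hloss
      by (field; lra). nra. }
  exists E2, P, L. split; [exact HE2|]. split; [exact HP|]. split; [exact HE1|].
  split; [split; [lra | nra]|]. split; [|split; [lra|]].
  - apply (two_player_time_lower lam Hlam L (H0 + P) HL). nra.
  - intro Hn2. assert (G0 = 1) by (unfold G0; apply surv_start; lra || lia). nra.
Qed.

Lemma threshold_pos (n : nat) : (2 <= n)%nat -> 0 < 1 / (16 * INR n).
Proof. intro Hn. apply Rdiv_lt_0_compat; [lra|]. pose proof (le_INR 2 n Hn) as HnR. simpl in HnR. lra. Qed.

(* (I): E[T_{n,1}] >= 1/(4 lambda) is unbounded as lambda -> 0. *)
Lemma expected_length_unbounded (n : nat) : (2 <= n)%nat ->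
  forall M, exists d, 0 < d /\ forall lam, 0 < lam -> lam < d ->
    exists N, M < sum_f_R0 (surv lam n 1) N.
Proof.
  intros Hn M. set (dl := 1 / (16 * INR n)). pose proof (threshold_pos n Hn) as Hdl.
  assert (HM : 0 < Rabs M + 1) by (pose proof (Rabs_pos M); lra).
  exists (Rmin (dl ^ (n - 1)) (1 / (4 * (Rabs M + 1)))). split.
  { apply Rmin_pos; [apply pow_lt; exact Hdl | apply Rdiv_lt_0_compat; lra]. }
  intros lam Hl Hlt.
  destruct (small_lambda_estimates n lam dl Hn Hl Hdl (Rle_refl _)
    (Rlt_le_trans _ _ _ Hlt (Rmin_l _ _))) as [E2 [P [L [_ [_ [HE1 [HE2 [HL _]]]]]]]].
  apply (series_exceeds _ _ _ HE1).
  assert (Hsmall : lam * (4 * (Rabs M + 1)) < 1).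
  { pose proof (Rlt_le_trans _ _ _ Hlt (Rmin_r _ _)) as H.
    apply Rmult_lt_compat_r with (r := 4 * (Rabs M + 1)) in H; [|lra].
    replace (1 / (4 * (Rabs M + 1)) * (4 * (Rabs M + 1))) with 1 in H by (field; lra). exact H. }
  assert (Rabs M + 1 < 1 / (4 * lam)).
  { apply Rmult_lt_reg_r with (4 * lam); [lra|].
    replace (1 / (4 * lam) * (4 * lam)) with 1 by (field; lra). lra. }
  pose proof (Rle_abs M). lra.
Qed.

(* (II): Pr(T_{n,2} < T_{n,1}) >= 1 - 8 n delta tends to 1. *)
Lemma reach_two_likely (n : nat) : (2 < n)%nat ->
  forall eps, 0 < eps -> exists d, 0 < d /\ forall lam, 0 < lam -> lam < d ->
    exists P, infinite_sum (enter2 lam n) P /\ Rabs (P - 1) < eps.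
Proof.
  intros Hn eps Heps. pose proof (threshold_pos n ltac:(lia)) as Hd0.
  assert (HnR : 0 < 16 * INR n) by (pose proof (lt_0_INR n ltac:(lia)); lra).
  set (dl := Rmin (1 / (16 * INR n)) (eps / (16 * INR n))).
  assert (Hdl : 0 < dl) by (apply Rmin_pos; [exact Hd0 | apply Rdiv_lt_0_compat; lra]).
  exists (dl ^ (n - 1)). split; [apply pow_lt; exact Hdl|].
  intros lam Hl Hlt.
  destruct (small_lambda_estimates n lam dl ltac:(lia) Hl Hdl (Rmin_l _ _) Hlt)
    as [E2 [P [L [_ [HP [_ [_ [_ [HP1 HPlow]]]]]]]]].
  exists P. split; [exact HP|]. specialize (HPlow Hn).
  assert (16 * INR n * dl <= eps).
  { apply Rle_trans with (16 * INR n * (eps / (16 * INR n))).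
    - apply Rmult_le_compat_l; [lra | apply Rmin_r].
    - right. field. lra. }
  rewrite Rabs_left1 by lra. nra.
Qed.

(* (III): E[T_{n,2}] / E[T_{n,1}] <= (4 delta / lambda) / (1 / (4 lambda)) = 16 delta. *)
Lemma time_to_two_negligible (n : nat) : (2 < n)%nat ->
  forall eps, 0 < eps -> exists d, 0 < d /\ forall lam, 0 < lam -> lam < d ->
    exists E1 E2, infinite_sum (surv lam n 1) E1 /\ infinite_sum (surv lam n 2) E2 /\
      Rabs (E2 / E1) < eps.
Proof.
  intros Hn eps Heps. pose proof (threshold_pos n ltac:(lia)) as Hd0.
  set (dl := Rmin (1 / (16 * INR n)) (eps / 32)).
  assert (Hdl : 0 < dl) by (apply Rmin_pos; lra).
  exists (dl ^ (n - 1)). split; [apply pow_lt; exact Hdl|].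
  intros lam Hl Hlt.
  destruct (small_lambda_estimates n lam dl ltac:(lia) Hl Hdl (Rmin_l _ _) Hlt)
    as [E2 [P [L [HE2 [_ [HE1 [HE2b [HL _]]]]]]]].
  exists (E2 + L), E2. split; [exact HE1|]. split; [exact HE2|].
  assert (dl <= eps / 32) by apply Rmin_r.
  assert (HL0 : 0 < L) by (apply Rlt_le_trans with (1 / (4 * lam)); [apply Rdiv_lt_0_compat|]; lra).
  assert (Hsmall : E2 <= 16 * dl * L).
  { apply Rle_trans with (4 * dl / lam); [lra|].
    apply Rmult_le_reg_r with lam; [exact Hl|].
    replace (4 * dl / lam * lam) with (4 * dl) by (field; lra).
    apply Rmult_le_compat_r with (r := 4 * lam) in HL; [|lra].
    replace (1 / (4 * lam) * (4 * lam)) with 1 in HL by (field; lra). nra. }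
  rewrite Rabs_right.
  - apply Rmult_lt_reg_r with (E2 + L); [lra|].
    replace (E2 / (E2 + L) * (E2 + L)) with E2 by (field; lra). nra.
  - apply Rle_ge, Rmult_le_pos; [lra | left; apply Rinv_0_lt_compat; lra].
Qed.

Lemma util_pos (rho x : R) : rho <= 0 -> 0 < x -> 0 < util rho x.
Proof.
  intros Hr Hx. unfold util. destruct (Req_EM_T rho 0); [exact Hx|].
  assert (1 < exp (- rho * x)) by (rewrite <- exp_0; apply exp_increasing; nra).
  replace ((1 - exp (- rho * x)) / rho) with ((exp (- rho * x) - 1) / (- rho)) by (field; lra).
  apply Rdiv_lt_0_compat; lra.
Qed.

Lemma lambda_pos (rho c v s : R) : rho <= 0 -> 0 < c -> c < v - s -> 0 < lambda rho c v s.
Proof. intros. unfold lambda. apply Rdiv_lt_0_compat; apply util_pos; lra. Qed.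

Theorem theorem4 (n : nat) (rho : R) (Hn : (2 <= n)%nat) (Hrho : rho <= 0) :
  (forall M : R, exists d : R, 0 < d /\
     forall c v s : R, 0 < c -> 0 <= s -> c < v - s ->
       lambda rho c v s < d ->
       exists N : nat, M < sum_f_R0 (surv (lambda rho c v s) n 1) N)
  /\
  ((2 < n)%nat -> forall eps : R, 0 < eps -> exists d : R, 0 < d /\
     forall c v s : R, 0 < c -> 0 <= s -> c < v - s ->
       lambda rho c v s < d ->
       exists P : R, infinite_sum (enter2 (lambda rho c v s) n) P /\
                     Rabs (P - 1) < eps)
  /\
  ((2 < n)%nat -> forall eps : R, 0 < eps -> exists d : R, 0 < d /\
     forall c v s : R, 0 < c -> 0 <= s -> c < v - s ->
       lambda rho c v s < d ->
       exists E1 E2 : R,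
         infinite_sum (surv (lambda rho c v s) n 1) E1 /\
         infinite_sum (surv (lambda rho c v s) n 2) E2 /\
         Rabs (E2 / E1) < eps).
Proof.
  split; [|split].
  - intro M. destruct (expected_length_unbounded n Hn M) as [d [Hd Hlen]].
    exists d. split; [exact Hd|]. intros c v s Hc _ Hcv Hlt.
    exact (Hlen _ (lambda_pos rho c v s Hrho Hc Hcv) Hlt).
  - intros Hn2 eps Heps. destruct (reach_two_likely n Hn2 eps Heps) as [d [Hd Hreach]].
    exists d. split; [exact Hd|]. intros c v s Hc _ Hcv Hlt.
    exact (Hreach _ (lambda_pos rho c v s Hrho Hc Hcv) Hlt).
  - intros Hn2 eps Heps. destruct (time_to_two_negligible n Hn2 eps Heps) as [d [Hd Hratio]].
    exists d. split; [exact Hd|]. intros c v s Hc _ Hcv Hlt.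
    exact (Hratio _ (lambda_pos rho c v s Hrho Hc Hcv) Hlt).
Qed.
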